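(* Let $m\ge2$, let $C=\mathrm{diag}(c_1,\dots,c_m)$ be a real diagonal matrix, and let $L(\rho)=-2\,\mathrm{tr}(C\rho)$ on $\dot P_m$, whose gradient system with respect to the quantum SLD Fisher metric is $\frac{d\rho}{dt}=(\rho C+C\rho)-2\,\mathrm{tr}(\rho C)\rho$. Let $\Lambda(w)=-\frac12w^TCw$ on $\mathcal S_m$, with gradient $\mathrm{grad}\,\Lambda(w)=-Cw+(w^TCw)w$ (so that $\frac{dw}{dt}=-\mathrm{grad}\,\Lambda(w)=Cw-(w^TCw)w$ is the averaged learning equation of Hebb type), and let $\mu_\ast\mathrm{grad}\,\Lambda$ be the vector field on $\mathcal D_m$ defined by $\mu_\ast\mathrm{grad}\,\Lambda(\mu(w))=\mu_{\ast,w}(\mathrm{grad}\,\Lambda(w))$ for $w\in\mathcal S_m$. Then for every $\Theta\in\mathcal D_m$, $$\mathrm{grad}\,L(\Theta)=\mu_\ast\mathrm{grad}\,\Lambda(\Theta).$$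
   Context: $\mathcal S_m=\{w\in\mathbf R^m:\|w\|=1,\ w_k\ne0\ \forall k\}$ with $T_w\mathcal S_m=\{u:w^Tu=0\}$ and metric $u^Tu'$; $\mathcal D_m=\{\mathrm{diag}(\theta_1,\dots,\theta_m):\sum\theta_k=1,\theta_k>0\}\subset\dot P_m$; $\mu:\mathcal S_m\to\mathcal D_m$, $\mu(w)=\mathrm{diag}(w_1^2,\dots,w_m^2)$, with differential $\mu_{\ast,w}(u)=2\,\mathrm{diag}(w_1u_1,\dots,w_mu_m)$. (The vector field $\mu_\ast\mathrm{grad}\,\Lambda$ is well defined since $\mu(w)=\mu(w')$ iff $w'$ is obtained from $w$ by coordinate sign changes, under which $\mathrm{grad}\,\Lambda$ is equivariant.) $\dot P_m$ is the set of $m\times m$ complex Hermitian positive definite trace-one matrices, $T_\rho\dot P_m$ the Hermitian traceless matrices. The SLD $\mathcal L_\rho(\Xi)$ is the Hermitian solution of $\frac12(\rho\mathcal L_\rho(\Xi)+\mathcal L_\rho(\Xi)\rho)=\Xi$; the quantum SLD Fisher metric is $\langle\Xi,\Xi'\rangle_\rho=\frac12\mathrm{tr}[\rho(\mathcal L_\rho(\Xi)\mathcal L_\rho(\Xi')+\mathcal L_\rho(\Xi')\mathcal L_\rho(\Xi))]$. The gradient $\mathrm{grad}\,L(\rho)\in T_\rho\dot P_m$ is defined by $\langle\mathrm{grad}\,L(\rho),\Xi\rangle_\rho=\frac{d}{d\tau}\big|_{\tau=0}L(r(\tau))$ for every smooth curve $r$ in $\dot P_m$ with $r(0)=\rho$,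 $r'(0)=\Xi$. *)

From mathcomp Require Import all_boot all_order all_algebra.
From mathcomp Require Import all_classical all_reals all_analysis.
From mathcomp Require Import complex.
Import Order.TTheory GRing.Theory Num.Theory.
Set Implicit Arguments. Unset Strict Implicit. Unset Printing Implicit Defensive.
Local Open Scope ring_scope.
Local Open Scope complex_scope.

Definition cmx (R : realType) (m n : nat) (A : 'M[R]_(m, n)) : 'M[R[i]]_(m, n) :=
  map_mx (fun x => x%:C) A.

Definition adjmx (R : realType) (m n : nat) (A : 'M[R[i]]_(m, n)) : 'M[R[i]]_(n, m) :=
  (map_mx conjc A)^T.

Definition hermitian (R : realType) (m : nat) (A : 'M[R[i]]_m) : Prop :=
  adjmx A = A.

Definition inP (R : realType) (m : nat) (rho : 'M[R[i]]_m) : Prop :=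
  [/\ hermitian rho,
      (forall v : 'cV[R[i]]_m, v != 0 -> 0 < (adjmx v *m rho *m v) 0 0)
    & \tr rho = 1].

Definition tangentP (R : realType) (m : nat) (Xi : 'M[R[i]]_m) : Prop :=
  hermitian Xi /\ \tr Xi = 0.

(* symmetric logarithmic derivative: the Hermitian solution X of
   (rho X + X rho)/2 = Xi  (unique for rho in \dot P_m) *)
Definition SLD (R : realType) (m : nat) (rho Xi : 'M[R[i]]_m) : 'M[R[i]]_m :=
  xget 0 [set X : 'M[R[i]]_m | hermitian X /\
                 (2%:R^-1 : R[i]) *: (rho *m X + X *m rho) = Xi]%classic.

Definition qfisher (R : realType) (m : nat) (rho Xi Xi' : 'M[R[i]]_m) : R[i] :=
  2%:R^-1 * \tr (rho *m (SLD rho Xi *m SLD rho Xi' + SLD rho Xi' *m SLD rho Xi)).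

Definition smooth_on (R : realType) (I : set R) (f : R -> R) : Prop :=
  forall (n : nat) (x : R), I x -> derivable (iter n (@derive1 R R) f) x 1.

Definition smooth_curve_through (R : realType) (m : nat) (r : R -> 'M[R[i]]_m)
    (e : R) (rho Xi : 'M[R[i]]_m) : Prop :=
  [/\ 0 < e,
      (forall t : R, `]-e, e[%classic t -> inP (r t)),
      (forall i j, smooth_on `]-e, e[%classic (fun t => complex.Re (r t i j)) /\
                   smooth_on `]-e, e[%classic (fun t => complex.Im (r t i j))),
      r 0 = rho
    & (forall i j, derive1 (fun t => complex.Re (r t i j)) 0 = complex.Re (Xi i j) /\
                   derive1 (fun t => complex.Im (r t i j)) 0 = complex.Im (Xi i j))].

Definition is_qgrad (R : realType) (m : nat) (L : 'M[R[i]]_m -> R)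
    (rho G : 'M[R[i]]_m) : Prop :=
  tangentP G /\
  forall (r : R -> 'M[R[i]]_m) (e : R) (Xi : 'M[R[i]]_m),
    smooth_curve_through r e rho Xi ->
    derivable (fun t => L (r t)) 0 1 /\
    (derive1 (fun t => L (r t)) 0)%:C = qfisher rho G Xi.

(* L(rho) = -2 tr(C rho) (real for Hermitian rho; we take the real part) *)
Definition Lqobj (R : realType) (m : nat) (C : 'M[R]_m) (rho : 'M[R[i]]_m) : R :=
  - 2%:R * complex.Re (\tr (cmx C *m rho)).

Definition inS (R : realType) (m : nat) (w : 'cV[R]_m) : Prop :=
  (w^T *m w) 0 0 = 1 /\ forall k, w k 0 != 0.

Definition inD (R : realType) (m : nat) (Theta : 'M[R]_m) : Prop :=
  [/\ is_diag_mx Theta, (forall k, 0 < Theta k k) & \tr Theta = 1].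

Definition mu (R : realType) (m : nat) (w : 'cV[R]_m) : 'M[R]_m :=
  diag_mx (\row_k (w k 0 ^+ 2)).

Definition mu_star (R : realType) (m : nat) (w u : 'cV[R]_m) : 'M[R]_m :=
  diag_mx (\row_k (2%:R * (w k 0 * u k 0))).

Definition Lambda (R : realType) (m : nat) (C : 'M[R]_m) (w : 'cV[R]_m) : R :=
  - 2%:R^-1 * (w^T *m C *m w) 0 0.
Definition gradLambda (R : realType) (m : nat) (C : 'M[R]_m) (w : 'cV[R]_m) : 'cV[R]_m :=
  - (C *m w) + (w^T *m C *m w) 0 0 *: w.

From Pilot Require Import Defs.
From mathcomp Require Import all_boot all_order all_algebra.
From mathcomp Require Import all_classical all_reals all_analysis.
From mathcomp Require Import complex.
From mathcomp Require Import ring lra.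
Import Order.TTheory GRing.Theory Num.Theory.
Set Implicit Arguments. Unset Strict Implicit. Unset Printing Implicit Defensive.
Local Open Scope ring_scope.
Local Open Scope complex_scope.

(* At a diagonal state rho = diag(theta) the SLD equation decouples entrywise,
   L_rho(Xi)_ij = 2 Xi_ij / (theta_i + theta_j), so the Fisher metric against a
   diagonal G = diag(g) reduces to sum_k g_k Xi_kk / theta_k.  Since
   dL(Xi) = -2 sum_k c_k Xi_kk and sum_k Xi_kk = 0 on tangent vectors, the
   gradient is diag(2 theta_k (s - c_k)) with s = sum_k c_k theta_k = tr(C rho).
   With theta_k = w_k^2 this is exactly 2 diag(w_k (grad Lambda(w))_k). *)

Lemma Re_sum (R : realType) (I : Type) (s : seq I) (P : pred I) (F : I -> R[i]) :
  complex.Re (\sum_(k <- s | P k) F k) = \sum_(k <- s | P k) complex.Re (F k).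
Proof. exact: (raddf_sum (@complex.Re R : Rcomplex R -> R)). Qed.

Lemma cmx_diag (R : realType) (n : nat) (d : 'rV[R]_n) :
  cmx (diag_mx d) = diag_mx (cmx d).
Proof. exact: map_diag_mx. Qed.

Lemma hermitian_cmx_diag (R : realType) (n : nat) (d : 'rV[R]_n) :
  Defs.hermitian (cmx (diag_mx d)).
Proof.
apply/matrixP => i j; rewrite /adjmx /cmx !mxE eq_sym.
by case: eqP => [->|_]; rewrite ?mulr1n ?mulr0n ?conjc_real ?rmorph0.
Qed.

Lemma hermitianE (R : realType) (n : nat) (A : 'M[R[i]]_n) :
  Defs.hermitian A -> forall i j, A i j = conjc (A j i).
Proof. by move=> hA i j; rewrite -[in LHS]hA /adjmx !mxE. Qed.

Lemma hermitian_diag_real (R : realType) (n : nat) (A : 'M[R[i]]_n) k :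
  Defs.hermitian A -> A k k = (complex.Re (A k k))%:C.
Proof.
move=> /hermitianE /(_ k k); case: (A k k) => a b /= [hb].
by apply/eqP; rewrite eq_complex /= eqxx; apply/eqP; lra.
Qed.

Section DiagonalState.
Variables (R : realType) (m : nat) (theta : 'rV[R]_m).
Hypothesis theta_gt0 : forall k, 0 < theta 0 k.

Let rho := cmx (diag_mx theta).

Lemma thetaDC_neq0 i j : (theta 0 i)%:C + (theta 0 j)%:C != 0 :> R[i].
Proof. by rewrite -rmorphD fmorph_eq0 gt_eqF // addr_gt0. Qed.

Definition sld_diag (Xi : 'M[R[i]]_m) : 'M[R[i]]_m :=
  \matrix_(i, j) (2 * Xi i j / (theta 0 i + theta 0 j)%:C).

Lemma anticommutator_diagE (X : 'M[R[i]]_m) i j :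
  ((2%:R^-1 : R[i]) *: (rho *m X + X *m rho)) i j
    = 2^-1 * (theta 0 i + theta 0 j)%:C * X i j.
Proof. by rewrite /rho cmx_diag mul_diag_mx mul_mx_diag !mxE rmorphD; ring. Qed.

Lemma sld_diagP (Xi : 'M[R[i]]_m) :
  (2%:R^-1 : R[i]) *: (rho *m sld_diag Xi + sld_diag Xi *m rho) = Xi.
Proof.
apply/matrixP => i j; rewrite anticommutator_diagE mxE.
by field; exact: thetaDC_neq0.
Qed.

Lemma sld_diag_uniq (Xi X : 'M[R[i]]_m) :
  (2%:R^-1 : R[i]) *: (rho *m X + X *m rho) = Xi -> X = sld_diag Xi.
Proof.
move=> <-; apply/matrixP => i j; rewrite mxE anticommutator_diagE.
by field; exact: thetaDC_neq0.
Qed.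

Lemma hermitian_sld_diag (Xi : 'M[R[i]]_m) :
  Defs.hermitian Xi -> Defs.hermitian (sld_diag Xi).
Proof.
move=> /hermitianE hX; apply/matrixP => i j; rewrite /adjmx !mxE [Xi i j]hX.
rewrite !(rmorphM conjc) (fmorphV conjc) (rmorph_nat conjc) addrC.
by congr (_ * _ / _); exact: conjc_real.
Qed.

Lemma SLD_diag (Xi : 'M[R[i]]_m) : Defs.hermitian Xi -> SLD rho Xi = sld_diag Xi.
Proof.
move=> hX; apply: sld_diag_uniq; rewrite /SLD; set P := (X in xget _ X).
suff [] : P (xget 0 P) by [].
by apply: xgetPex; exists (sld_diag Xi); split;
  [exact: hermitian_sld_diag | exact: sld_diagP].
Qed.

Lemma thetaC_neq0 k : (theta 0 k)%:C != 0 :> R[i].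
Proof. by rewrite fmorph_eq0 gt_eqF. Qed.

Lemma sld_diag_diag (g : 'rV[R]_m) :
  sld_diag (cmx (diag_mx g)) = diag_mx (\row_k (g 0 k / theta 0 k)%:C).
Proof.
apply/matrixP => i j; rewrite cmx_diag !mxE eq_sym.
case: eqP => [->|_]; last by rewrite !mulr0n mulr0 mul0r.
by rewrite !mulr1n; field; rewrite thetaC_neq0 thetaDC_neq0.
Qed.

Lemma qfisher_diag (g : 'rV[R]_m) (Xi : 'M[R[i]]_m) : Defs.hermitian Xi ->
  qfisher rho (cmx (diag_mx g)) Xi = \sum_k (g 0 k / theta 0 k)%:C * Xi k k.
Proof.
move=> hX; rewrite /qfisher (SLD_diag hX) (SLD_diag (hermitian_cmx_diag g)).
rewrite sld_diag_diag /mxtrace mulr_sumr; apply: eq_bigr => k _.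
rewrite /rho cmx_diag !mul_diag_mx mul_mx_diag !mxE.
by field; rewrite thetaDC_neq0 thetaC_neq0.
Qed.

End DiagonalState.

Section SmoothCurve.
Variables (R : realType) (m : nat) (r : R -> 'M[R[i]]_m) (e : R).
Variables (rho Xi : 'M[R[i]]_m).
Hypothesis hr : smooth_curve_through r e rho Xi.

Lemma curve_near_inP : \forall t \near 0, inP (r t).
Proof.
case: hr => e0 hin _ _ _.
have : \forall t \near 0, t \in `]-e, e[ by apply: near_in_itvoo; rewrite in_itv /= oppr_lt0 e0.
by apply: filterS => t; rewrite inE; exact: hin.
Qed.

Lemma zero_in_curve_domain : `]-e, e[%classic (0 : R).
Proof. by case: hr => e0 _ _ _ _; rewrite /= in_itv /= oppr_lt0 e0. Qed.

Lemma is_derive_curve_Re i j :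
  is_derive (0 : R) 1 (fun t => complex.Re (r t i j)) (complex.Re (Xi i j)).
Proof.
case: hr => _ _ hsm _ hder; rewrite -(hder i j).1 derive1E; apply: derivableP.
exact: ((hsm i j).1 0%N 0 zero_in_curve_domain).
Qed.

Lemma curve_tangent_hermitian : Defs.hermitian Xi.
Proof.
have rH : \forall t \near 0, forall i j, r t i j = conjc (r t j i).
  by apply: filterS curve_near_inP => t [/hermitianE].
case: hr => _ _ hsm _ hder; apply/matrixP => i j; rewrite /adjmx !mxE.
have dRe : complex.Re (Xi i j) = complex.Re (Xi j i).
  rewrite -(hder i j).1 -(hder j i).1 !derive1E; apply: near_eq_derive.
  by apply: filterS rH => t /(_ i j) ->; case: (r t j i).
have dIm : complex.Im (Xi i j) = - complex.Im (Xi j i).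
  rewrite -(hder i j).2 -(hder j i).2 !derive1E -deriveN; last first.
    exact: ((hsm j i).2 0%N 0 zero_in_curve_domain).
  apply: near_eq_derive; apply: filterS rH => t /(_ i j) ->.
  by rewrite -[RHS]/(- complex.Im (r t j i)); case: (r t j i).
by apply/eqP; rewrite eq_complex dRe dIm; case: (Xi j i) => a b /=; rewrite !eqxx.
Qed.

Lemma is_derive_curve_diag_comb (a : 'I_m -> R) :
  is_derive (0 : R) 1 (fun t => \sum_k a k * complex.Re (r t k k))
    (\sum_k a k * complex.Re (Xi k k)).
Proof.
have := is_derive_sum (fun k => is_deriveZ (a k) (is_derive_curve_Re k k)).
by apply: near_eq_is_derive; apply: filterE => t; rewrite fct_sumE.
Qed.

Lemma curve_tangent_trace : \sum_k complex.Re (Xi k k) = 0.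
Proof.
have d1 := is_derive_curve_diag_comb (fun=> 1).
have dcst : is_derive (0 : R) 1 (cst (1 : R)) (\sum_k 1 * complex.Re (Xi k k)).
  apply: near_eq_is_derive d1; apply: filterS curve_near_inP => t [_ _ tr1].
  under eq_bigr do rewrite mul1r.
  by move: (congr1 (@complex.Re R) tr1); rewrite /mxtrace Re_sum => ->.
transitivity (\sum_k 1 * complex.Re (Xi k k)); first by under [RHS]eq_bigr do rewrite mul1r.
by rewrite -(derive_val (is_derive := dcst)) derive_cst.
Qed.

End SmoothCurve.

Lemma Lqobj_diagE (R : realType) (m : nat) (c : 'rV[R]_m) (rho : 'M[R[i]]_m) :
  Lqobj (diag_mx c) rho = \sum_k (-2 * c 0 k) * complex.Re (rho k k).
Proof.
rewrite /Lqobj cmx_diag mul_diag_mx /mxtrace Re_sum mulr_sumr.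
by apply: eq_bigr => k _; rewrite !mxE; case: (rho k k) => a b /=; ring.
Qed.

Theorem is_qgrad_Lqobj_diag (R : realType) (m : nat) (c theta : 'rV[R]_m) :
  (forall k, 0 < theta 0 k) -> \sum_k theta 0 k = 1 ->
  let s := \sum_k c 0 k * theta 0 k in
  is_qgrad (Lqobj (diag_mx c)) (cmx (diag_mx theta))
    (cmx (diag_mx (\row_k (2 * theta 0 k * (s - c 0 k))))).
Proof.
move=> theta_gt0 theta1 s; split.
  split; first exact: hermitian_cmx_diag.
  rewrite cmx_diag mxtrace_diag; under eq_bigr do rewrite !mxE.
  rewrite -rmorph_sum /=; congr (_%:C); apply/eqP.
  under eq_bigr do rewrite mulrBr mulrAC.
  rewrite sumrB -mulr_sumr theta1 mulr1 /s mulr_sumr subr_eq0.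
  by apply/eqP/eq_bigr => k _; ring.
move=> r e Xi hr; have hX := curve_tangent_hermitian hr.
have dL := is_derive_curve_diag_comb hr (fun k => -2 * c 0 k).
under eq_fun do rewrite Lqobj_diagE; split; first exact: (ex_derive (is_derive := dL)).
rewrite derive1E (derive_val (is_derive := dL)) qfisher_diag //.
under [RHS]eq_bigr do rewrite mxE (hermitian_diag_real _ hX) -rmorphM.
rewrite -(rmorph_sum (real_complex R)); congr (_%:C).
have -> : \sum_k (-2 * c 0 k) * complex.Re (Xi k k)
        = \sum_k 2 * (s - c 0 k) * complex.Re (Xi k k) - 2 * s * \sum_k complex.Re (Xi k k).
  by rewrite mulr_sumr -sumrB; apply: eq_bigr => k _; ring.
rewrite (curve_tangent_trace hr) mulr0 subr0; apply: eq_bigr => k _.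
by field; rewrite gt_eqF ?theta_gt0.
Qed.

Lemma mu_star_gradLambda_diag (R : realType) (m : nat) (c : 'rV[R]_m) (w : 'cV[R]_m) :
  mu_star w (gradLambda (diag_mx c) w)
    = diag_mx (\row_k (2 * w k 0 ^+ 2 * (\sum_j c 0 j * w j 0 ^+ 2 - c 0 k))).
Proof.
rewrite /mu_star /gradLambda.
have -> : (w^T *m diag_mx c *m w) 0 0 = \sum_j c 0 j * w j 0 ^+ 2.
  by rewrite mxE; apply: eq_bigr => j _; rewrite mul_mx_diag !mxE; ring.
by apply/matrixP => i j; rewrite mul_diag_mx !mxE; ring.
Qed.

Theorem theorem1 (R : realType) (m : nat) (hm : (2 <= m)%N) (c : 'rV[R]_m)
    (Theta : 'M[R]_m) (hTheta : inD Theta)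
    (w : 'cV[R]_m) (hw : inS w) (hmu : mu w = Theta) :
  is_qgrad (Lqobj (diag_mx c)) (cmx Theta)
    (cmx (mu_star w (gradLambda (diag_mx c) w))).
Proof.
pose theta : 'rV[R]_m := \row_k (w k 0 ^+ 2).
have ThetaE : Theta = diag_mx theta by rewrite -hmu.
case: hTheta; rewrite ThetaE mxtrace_diag => _ theta_gt0 theta1.
have theta_gt0' k : 0 < theta 0 k by have := theta_gt0 k; rewrite mxE eqxx mulr1n.
have -> : mu_star w (gradLambda (diag_mx c) w)
    = diag_mx (\row_k (2 * theta 0 k * (\sum_j c 0 j * theta 0 j - c 0 k))).
  rewrite mu_star_gradLambda_diag; congr diag_mx; apply/rowP => k; rewrite !mxE.
  by under [in RHS]eq_bigr do rewrite mxE.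
exact: is_qgrad_Lqobj_diag.
Qed.
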